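(* Define the bilinear forms on $\mathbb{R}^E$ $$\Omega(u,w)=\sum_\alpha\big(\langle c_\alpha,u\rangle\langle e_\alpha,w\rangle-\langle e_\alpha,u\rangle\langle c_\alpha,w\rangle\big),\qquad {*\Omega}(u,w)=\sum_\mu\big(\langle c_\mu,u\rangle\langle e_\mu,w\rangle-\langle e_\mu,u\rangle\langle c_\mu,w\rangle\big).$$ Then $\Omega={*\Omega}$.
   Context: Setup. Let $G=(V,E)$ be a finite connected graph with oriented edges (loops and multiple edges allowed), with edge space $\mathbb{R}^{E}$ carrying the Euclidean inner product $\langle\cdot,\cdot\rangle$, each edge identified with its standard basis vector. Fix a spanning tree $T\subseteq E$ of the underlying undirected graph. Edges in $T$ are cochords $e_\mu$, $\mu=1,\dots,|V|-1$; edges not in $T$ are chords $e_\alpha$, $\alpha=|V|,\dots,|E|$. For a chord $e_\alpha$, $T\cup\{e_\alpha\}$ contains a unique cycle; $c_\alpha\in\mathbb{R}^E$ has entry $+1$ (resp. $-1$) on each edge of this cycle whose orientation agrees (resp. disagrees) with traversal of the cycle in the direction of $e_\alpha$, and $0$ elsewhere. For a cochord $e_\mu$, $T\setminus\{e_\mu\}$ has two components; let $S_\mu$ be the vertex set of the component containing the tail of $e_\mu$; $c_\mu\in\mathbb{R}^E$ has entry $+1$ on edges with tail in $S_\mu$ and head not in $S_\mu$, $-1$ on edges with head in $S_\mu$ and tail not in $S_\mu$, and $0$ elsewhere. *)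

From HB Require Import structures.
From mathcomp Require Import all_boot all_order all_algebra.
Set Implicit Arguments. Unset Strict Implicit. Unset Printing Implicit Defensive.
Import Order.TTheory GRing.Theory Num.Theory.
Local Open Scope ring_scope.

(* An oriented multigraph: finite vertex type V, finite edge type E,
   each edge e has a tail [tl e] and a head [hd e] (loops allowed). *)
Section Graph.
Variables (V E : finType) (tl hd : E -> V).

Definition adj (F : {set E}) : rel V :=
  fun x y => [exists e in F, ((tl e == x) && (hd e == y)) || ((tl e == y) && (hd e == x))].

Definition graph_connected : Prop := forall x y : V, connect (adj setT) x y.

(* a step of a walk: an edge, with true = traversed from tail to head *)
Definition src (s : E * bool) : V := if s.2 then tl s.1 else hd s.1.
Definition dst (s : E * bool) : V := if s.2 then hd s.1 else tl s.1.

Fixpoint is_walk (F : {set E}) (u v : V) (p : seq (E * bool)) : bool :=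
  match p with
  | [::] => u == v
  | s :: p' => [&& s.1 \in F, src s == u & is_walk F (dst s) v p']
  end.

Definition acyclic (F : {set E}) : Prop :=
  forall (v : V) (p : seq (E * bool)),
    is_walk F v v p -> uniq (map fst p) -> p = [::].

Definition spanning_tree (T : {set E}) : Prop :=
  (forall x y : V, connect (adj T) x y) /\ acyclic T.

Definition ip (R : numDomainType) (c u : E -> R) : R := \sum_f c f * u f.

(* c is the signed fundamental cycle vector of the chord a:
   the unique cycle of T + a is a followed by the (vertex-simple) path in T
   from hd a back to tl a; entries +1/-1 according to orientation. *)
Definition fund_cycle_vec (R : numDomainType) (T : {set E}) (a : E) (c : E -> R) : Prop :=
  exists p : seq (E * bool),
    [/\ is_walk T (hd a) (tl a) p,
        uniq (hd a :: map dst p) &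
        forall f, c f = (f == a)%:R
                        + \sum_(s <- p | s.1 == f) (if s.2 then 1 else -1)].

Definition cut_side (T : {set E}) (e : E) : {set V} :=
  [set v | connect (adj (T :\ e)) (tl e) v].

(* fundamental cocycle (cut) vector of the cochord e *)
Definition cut_vec (R : numDomainType) (T : {set E}) (e : E) : E -> R :=
  fun f => let S := cut_side T e in
    if (tl f \in S) && (hd f \notin S) then 1
    else if (hd f \in S) && (tl f \notin S) then -1 else 0.

Definition Omega (R : numDomainType) (T : {set E}) (cch : E -> E -> R) (u w : E -> R) : R :=
  \sum_(a | a \notin T) (ip (cch a) u * w a - u a * ip (cch a) w).

Definition starOmega (R : numDomainType) (T : {set E}) (u w : E -> R) : R :=
  \sum_(m in T) (ip (cut_vec R T m) u * w m - u m * ip (cut_vec R T m) w).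

End Graph.

(* For a chord a and a tree edge f, the fundamental cycle of a crosses the cut
   of f exactly once more in one direction than in the other, and that excess
   is opposite to the way a itself crosses the cut: c_a(f) = - c_f(a).  Off
   these mixed pairs both vectors are trivial (c_a is e_a on chords, c_f is
   e_f on tree edges), so expanding both forms in coordinates leaves the same
   double sum over pairs (chord, tree edge). *)
From HB Require Import structures.
From mathcomp Require Import all_boot all_order all_algebra.
From mathcomp Require Import ring.
Import Order.TTheory GRing.Theory Num.Theory.
Local Open Scope ring_scope.
Set Implicit Arguments. Unset Strict Implicit.

Section Walks.
Variables (V E : finType) (tl hd : E -> V).

Lemma walk_edge_in (F : {set E}) u v p s :
  is_walk tl hd F u v p -> s \in p -> s.1 \in F.
Proof.
elim: p u => [|t p IH] u //= /and3P[tF _ W]; rewrite inE => /orP[/eqP->//|].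
exact: IH W.
Qed.

Lemma walk_cat (F : {set E}) x y z p q :
  is_walk tl hd F x y p -> is_walk tl hd F y z q -> is_walk tl hd F x z (p ++ q).
Proof.
elim: p x => [|s p IH] x /=; first by move=> /eqP->.
by move=> /and3P[-> -> W] Wq /=; apply: IH.
Qed.

Lemma walk_subset (F G : {set E}) x y p :
  F \subset G -> is_walk tl hd F x y p -> is_walk tl hd G x y p.
Proof.
move=> sFG; elim: p x => [|s p IH] x //= /and3P[sF -> W].
by rewrite (subsetP sFG _ sF) IH.
Qed.

Lemma walk_uniq_edges (F : {set E}) u v p :
  is_walk tl hd F u v p -> uniq (u :: map (dst tl hd) p) -> uniq (map fst p).
Proof.
elim: p u => [|s p IH] u //= /and3P[_ /eqP su W] /and3P[nu_u nu_s Up].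
rewrite (IH _ W) ?andbT; last by rewrite /= nu_s Up.
apply/mapP => -[t tp est].
have dtp : dst tl hd t \in map (dst tl hd) p by apply: map_f.
have : dst tl hd t \in [:: u; dst tl hd s].
  rewrite -su /src /dst est; case: (t.2); case: (s.2);
  by rewrite !inE eqxx ?orbT.
rewrite !inE => /orP[/eqP dt_u|/eqP dt_s].
  by move: nu_u; rewrite inE negb_or -dt_u dtp andbF.
by move: nu_s; rewrite -dt_s dtp.
Qed.

Lemma adj_path_walk (F : {set E}) x q :
  path (adj tl hd F) x q ->
  exists p, is_walk tl hd F x (last x q) p /\ map (dst tl hd) p = q.
Proof.
elim: q x => [|y q IH] x /=; first by move=> _; exists [::]; rewrite /= eqxx.
case/andP=> /existsP[e /andP[eF /orP[]/andP[/eqP te /eqP he]]] /IH[p [Wp Mp]].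
- by subst x y; exists ((e, true) :: p); rewrite /= eF /src /dst /= eqxx Wp Mp.
- by subst x y; exists ((e, false) :: p); rewrite /= eF /src /dst /= eqxx Wp Mp.
Qed.

Lemma connect_adj_walk (F : {set E}) x y :
  connect (adj tl hd F) x y ->
  exists2 p, is_walk tl hd F x y p & uniq (map fst p).
Proof.
move=> /connectP[q Pq ->]; case: (shortenP Pq) => q' P' U _.
have [p [Wp Mp]] := adj_path_walk P'.
by exists p => //; apply: (walk_uniq_edges Wp); rewrite Mp.
Qed.

End Walks.

Section FundamentalVectors.
Variables (R : numDomainType) (V E : finType) (tl hd : E -> V) (T : {set E}).

Local Notation S f := (cut_side tl hd T f).

Lemma tl_in_cut_side f : tl f \in S f.
Proof. by rewrite inE connect0. Qed.

Lemma cut_side_tlE f e :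
  e \in T -> e != f -> (tl e \in S f) = (hd e \in S f).
Proof.
move=> eT ef; have eF : e \in T :\ f by rewrite !inE ef eT.
rewrite !inE; apply/idP/idP => H; apply: connect_trans H (connect1 _);
  by apply/existsP; exists e; rewrite eF !eqxx ?orbT.
Qed.

(* Otherwise f together with the tree path from hd f back to tl f avoiding f
   would be a cycle in T. *)
Lemma hd_notin_cut_side f :
  acyclic tl hd T -> f \in T -> hd f \notin S f.
Proof.
move=> acT fT; apply/negP; rewrite inE => /connect_adj_walk[p Wp Up].
have W : is_walk tl hd T (tl f) (tl f) (p ++ [:: (f, false)]).
  apply: walk_cat (walk_subset (subsetDl _ _) Wp) _.
  by rewrite /= fT /src /dst /= !eqxx.
have nf : f \notin map fst p.
  by apply/mapP => -[s sp ef]; have := walk_edge_in Wp sp; rewrite -ef !inE eqxx.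
have U : uniq (map fst (p ++ [:: (f, false)])).
  by rewrite map_cat cats1 rcons_uniq nf Up.
by have := acT _ _ W U; case: p {Wp Up W U nf}.
Qed.

(* The signed number of traversals of f by a tree walk telescopes: every other
   tree edge keeps the walk on one side of the cut of f. *)
Lemma walk_cut_crossings f x y p :
  is_walk tl hd T x y p -> f \in T -> hd f \notin S f ->
  \sum_(s <- p | s.1 == f) (if s.2 then 1 else -1 : R) =
  (x \in S f)%:R - (y \in S f)%:R.
Proof.
move=> + fT hf; elim: p x => [|s p IH] x /=.
  by move=> /eqP->; rewrite big_nil subrr.
move=> /and3P[sT /eqP sx W]; rewrite big_cons (IH _ W) -sx /src /dst.
case: eqP => [->|/eqP sf].
  by case: s.2; rewrite ?tl_in_cut_side (negbTE hf) /=; ring.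
by case: (s.2) => /=; rewrite (cut_side_tlE sT sf).
Qed.

Lemma fund_cycle_vec_tree_edge (c : E -> R) a f :
  acyclic tl hd T -> a \notin T -> f \in T -> fund_cycle_vec tl hd T a c ->
  c f = - cut_vec tl hd R T f a.
Proof.
move=> acT aT fT [p [Wp _ ->]].
rewrite (walk_cut_crossings Wp fT (hd_notin_cut_side acT fT)).
have -> : (f == a) = false by apply: contraNF aT => /eqP <-.
rewrite add0r /cut_vec.
by case: (hd a \in _); case: (tl a \in _) => /=; ring.
Qed.

Lemma fund_cycle_vec_chord (c : E -> R) a f :
  f \notin T -> fund_cycle_vec tl hd T a c -> c f = (f == a)%:R.
Proof.
move=> fT [p [Wp _ ->]]; rewrite big1_seq ?addr0 // => s /andP[/eqP sf sp].
by move: (walk_edge_in Wp sp); rewrite sf (negbTE fT).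
Qed.

Lemma cut_vec_tree_edge m f :
  f \in T -> f != m -> cut_vec tl hd R T m f = 0.
Proof. by move=> fT fm; rewrite /cut_vec (cut_side_tlE fT fm); case: (hd f \in _). Qed.

End FundamentalVectors.

Lemma ip_wedgeE (R : numDomainType) (E : finType) (c u w : E -> R) a :
  ip c u * w a - u a * ip c w = \sum_f c f * (u f * w a - u a * w f).
Proof. by rewrite /ip mulr_suml mulr_sumr -sumrB; apply: eq_bigr => f _; ring. Qed.

(* Only the edges on the other side of the tree/chord split contribute to each
   term, the diagonal term vanishing by antisymmetry. *)
Lemma Omega_mixedE (R : numDomainType) (V E : finType) (tl hd : E -> V)
    (T : {set E}) (cch : E -> E -> R) (u w : E -> R) :
  (forall a, a \notin T -> fund_cycle_vec tl hd T a (cch a)) ->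
  Omega T cch u w =
  \sum_(a | a \notin T) \sum_(f in T) cch a f * (u f * w a - u a * w f).
Proof.
move=> Hc; apply: eq_bigr => a aT; rewrite ip_wedgeE (bigID (mem T)) /=.
rewrite [X in _ + X]big1 ?addr0 // => f fT.
by rewrite (fund_cycle_vec_chord fT (Hc a aT)); case: eqP => [->|_] /=; ring.
Qed.

Lemma starOmega_mixedE (R : numDomainType) (V E : finType) (tl hd : E -> V)
    (T : {set E}) (u w : E -> R) :
  starOmega tl hd T u w =
  \sum_(m in T) \sum_(f | f \notin T) cut_vec tl hd R T m f * (u f * w m - u m * w f).
Proof.
apply: eq_bigr => m mT; rewrite ip_wedgeE (bigID (mem T)) /=.
rewrite [X in X + _]big1 ?add0r // => f fT.
have [->|fm] := eqVneq f m; first ring.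
by rewrite (cut_vec_tree_edge _ _ _ fT fm); ring.
Qed.

(* Connectedness of the graph is implied by the spanning tree. *)
Theorem theorem4 (R : realFieldType) (V E : finType) (tl hd : E -> V)
  (T : {set E}) (cch : E -> E -> R)
  (Hconn : graph_connected tl hd)
  (HT : spanning_tree tl hd T)
  (Hc : forall a, a \notin T -> fund_cycle_vec tl hd T a (cch a))
  (u w : E -> R) :
  Omega T cch u w = starOmega tl hd T u w.
Proof.
rewrite (Omega_mixedE u w Hc) starOmega_mixedE exchange_big /=.
apply: eq_bigr => f fT; apply: eq_bigr => a aT.
by rewrite (fund_cycle_vec_tree_edge HT.2 aT fT (Hc a aT)); ring.
Qed.
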